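(* Let $r>0$, $R_0>r$, $V_T>0$ and $\Delta V>0$. Put $\alpha=R_0/r$, $V_s=\frac{2\pi R_0V_T}{r}+V_T+\Delta V$, $R_{last}=\frac{rV_T(2\pi+1)}{V_s}$, $t_1=\frac{R_{last}}{V_s-V_T}$ and $t_2=\frac{2V_sR_{last}}{(V_s-V_T)^2}$. Suppose that at time $0$ every undetected evader lies in the closed disk of radius $R_{last}$ centered at the origin, and that each evader moves along a continuous path with speed at most $V_T$. The sensor at time $\tau$ is the segment $\{(x_s(\tau),y):|y|\le r\}$, where $x_s(\tau)=V_s\tau$ for $0\le\tau\le t_1$ and $x_s(\tau)=V_st_1-V_s(\tau-t_1)$ for $t_1\le\tau\le t_1+t_2$. An evader is detected if at some time its position lies on the sensor. If $$\Delta V\ge -2\pi\alpha V_T+\pi V_T+V_T+V_T\sqrt{\pi^2+6\pi+7},$$ then every evader is detected by time $t_1+t_2$, i.e. the evader region is completely cleaned by this final linear scan.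
   Context: This is the end game of the sweep process: evaders start in a disk of radius $R_0$, the sweeper line sensor has length $2r$, and the sweeper speed is $V_s=V_c+\Delta V$ with $V_c=2\pi R_0V_T/r+V_T$. After the circular sweeps and a last inward motion, the evader region is contained in a disk of radius $R_{last}$. The sensor then sweeps to the right until it catches the rightward expanding front of the evader region, and then to the left until it catches the leftward expanding front. *)

From Stdlib Require Import Reals.
Open Scope R_scope.

Definition Vs (r R0 VT dV : R) : R := 2 * PI * R0 * VT / r + VT + dV.

Definition Rlast (r R0 VT dV : R) : R := r * VT * (2 * PI + 1) / Vs r R0 VT dV.

Definition t1 (r R0 VT dV : R) : R := Rlast r R0 VT dV / (Vs r R0 VT dV - VT).

Definition t2 (r R0 VT dV : R) : R :=
  2 * Vs r R0 VT dV * Rlast r R0 VT dV / (Vs r R0 VT dV - VT) ^ 2.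

Definition xs (r R0 VT dV : R) (tau : R) : R :=
  if Rle_dec tau (t1 r R0 VT dV)
  then Vs r R0 VT dV * tau
  else Vs r R0 VT dV * t1 r R0 VT dV - Vs r R0 VT dV * (tau - t1 r R0 VT dV).

Definition dist2 (x1 y1 x2 y2 : R) : R := sqrt ((x1 - x2) ^ 2 + (y1 - y2) ^ 2).

From Stdlib Require Import Reals Ranalysis5 Lra Psatz.
Open Scope R_scope.

(* An evader starting in the disk of radius [Rlast] stays, up to time [t], in the
   square of half-width [Rlast + V_T t].  During the left sweep the sensor starts
   at abscissa [Rlast + V_T t1], on the right of the evader, and ends at
   [-(Rlast + V_T (t1 + t2))], on its left, so by the intermediate value theorem the
   evader's abscissa meets the sensor's.  The hypothesis on [dV] guarantees
   [Rlast + V_T (t1 + t2) <= r], so the evader's ordinate is then within the sensor. *)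

Lemma Rabs_x_le_dist2 (a b c d : R) : Rabs (a - c) <= dist2 a b c d.
Proof.
  unfold dist2. rewrite <- sqrt_Rsqr_abs. apply sqrt_le_1_alt.
  pose proof (pow2_ge_0 (b - d)). unfold Rsqr. nra.
Qed.

Lemma Rabs_y_le_dist2 (a b c d : R) : Rabs (b - d) <= dist2 a b c d.
Proof.
  unfold dist2. rewrite <- sqrt_Rsqr_abs. apply sqrt_le_1_alt.
  pose proof (pow2_ge_0 (a - c)). unfold Rsqr. nra.
Qed.

Lemma Rabs_le_drift (u u0 b e : R) : Rabs u0 <= b -> Rabs (u - u0) <= e -> Rabs u <= b + e.
Proof.
  intros h0 h. pose proof (Rabs_triang (u - u0) u0) as htri.
  replace (u - u0 + u0) with u in htri by ring. lra.
Qed.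

Lemma IVT_interv_le (f : R -> R) (a b : R) :
  a <= b -> (forall x, a <= x <= b -> continuity_pt f x) ->
  f a <= 0 -> 0 <= f b -> exists z, a <= z <= b /\ f z = 0.
Proof.
  intros hab hf ha hb.
  destruct (Req_dec (f a) 0) as [za | na]; [exists a; split; [lra | exact za] |].
  destruct (Req_dec (f b) 0) as [zb | nb]; [exists b; split; [lra | exact zb] |].
  destruct (IVT_interv f a b hf) as [z hz]; [| lra | lra | exists z; exact hz].
  destruct (Req_dec a b); [subst b |]; lra.
Qed.

Lemma path_meets_leftward_point (f : R -> R) (a b c v : R) :
  a <= b -> (forall x, a <= x <= b -> continuity_pt f x) ->
  f a <= c -> c - v * (b - a) <= f b ->
  exists z, a <= z <= b /\ f z = c - v * (z - a).
Proof.
  intros hab hf ha hb.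
  destruct (IVT_interv_le (fun t => f t - (c - v * (t - a))) a b) as [z [hz fz]];
    [exact hab | | lra | lra | exists z; split; [exact hz | lra]].
  intros x hx. apply continuity_pt_minus; [exact (hf x hx) |]. reg.
Qed.

Section SpeedBoundedPath.

Variables (px py : R -> R) (VT R1 T : R).

Hypothesis hspeed : forall s t, 0 <= s <= T -> 0 <= t <= T ->
  dist2 (px t) (py t) (px s) (py s) <= VT * Rabs (t - s).
Hypothesis hinit : dist2 (px 0) (py 0) 0 0 <= R1.

Lemma path_x_bound (t : R) : 0 <= t <= T -> Rabs (px t) <= R1 + VT * t.
Proof.
  intros ht. apply (Rabs_le_drift _ (px 0)).
  - pose proof (Rabs_x_le_dist2 (px 0) (py 0) 0 0) as h.
    rewrite Rminus_0_r in h. lra.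
  - pose proof (hspeed 0 t ltac:(lra) ht) as h.
    rewrite Rminus_0_r, Rabs_right in h by lra.
    pose proof (Rabs_x_le_dist2 (px t) (py t) (px 0) (py 0)). lra.
Qed.

Lemma path_y_bound (t : R) : 0 <= t <= T -> Rabs (py t) <= R1 + VT * t.
Proof.
  intros ht. apply (Rabs_le_drift _ (py 0)).
  - pose proof (Rabs_y_le_dist2 (px 0) (py 0) 0 0) as h.
    rewrite Rminus_0_r in h. lra.
  - pose proof (hspeed 0 t ltac:(lra) ht) as h.
    rewrite Rminus_0_r, Rabs_right in h by lra.
    pose proof (Rabs_y_le_dist2 (px t) (py t) (px 0) (py 0)). lra.
Qed.

End SpeedBoundedPath.

(* [v (p + 1 + sqrt (p^2 + 6p + 7))] exceeds the larger root of [W^2 - (2p+1) v W - 2 (2p+1) v^2]. *)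
Lemma sweep_margin (p v W : R) :
  0 < p -> 0 < v -> v * (p + 1 + sqrt (p ^ 2 + 6 * p + 7)) <= W ->
  v * (2 * p + 1) * (W + 2 * v) <= W ^ 2.
Proof.
  intros hp hv hW.
  set (s := sqrt (p ^ 2 + 6 * p + 7)) in *.
  assert (hs0 : 0 <= s) by apply sqrt_pos.
  assert (hs2 : s * s = p ^ 2 + 6 * p + 7) by (apply sqrt_sqrt; nra).
  assert (hprod : 0 <= (W - v * (p + 1 + s)) * (W + v * (p + 1 + s) - (2 * p + 1) * v))
    by (apply Rmult_le_pos; nra).
  nra.
Qed.

Section FinalSweep.

Variables (r R0 VT dV : R).
Hypotheses (hr : 0 < r) (hVT : 0 < VT).
Hypothesis hcond : dV >= - 2 * PI * (R0 / r) * VT + PI * VT + VT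
                        + VT * sqrt (PI ^ 2 + 6 * PI + 7).

Let V := Vs r R0 VT dV.

Lemma Vs_lower_bound : VT * (PI + 2 + sqrt (PI ^ 2 + 6 * PI + 7)) <= V.
Proof.
  assert (hV : V = 2 * PI * (R0 / r) * VT + VT + dV) by (unfold V, Vs; field; lra).
  lra.
Qed.

Lemma Vs_gt_VT : VT < V.
Proof.
  pose proof Vs_lower_bound. pose proof PI_RGT_0.
  pose proof (sqrt_pos (PI ^ 2 + 6 * PI + 7)). nra.
Qed.

Lemma Rlast_pos : 0 < Rlast r R0 VT dV.
Proof.
  pose proof Vs_gt_VT. pose proof PI_RGT_0. unfold Rlast.
  apply Rdiv_lt_0_compat; [apply Rmult_lt_0_compat; [nra | lra] | fold V; lra].
Qed.

Lemma t1_pos : 0 < t1 r R0 VT dV.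
Proof.
  pose proof Vs_gt_VT. pose proof Rlast_pos. unfold t1. apply Rdiv_lt_0_compat; fold V; lra.
Qed.

Lemma t2_pos : 0 < t2 r R0 VT dV.
Proof.
  pose proof Vs_gt_VT. pose proof Rlast_pos. unfold t2. fold V.
  apply Rdiv_lt_0_compat; [nra | apply pow_lt; lra].
Qed.

Lemma Vs_mul_t1 : V * t1 r R0 VT dV = Rlast r R0 VT dV + VT * t1 r R0 VT dV.
Proof. pose proof Vs_gt_VT. unfold t1. fold V. field. lra. Qed.

Lemma Vs_mul_t1_sub_t2 :
  V * t1 r R0 VT dV - V * t2 r R0 VT dV
  = - (Rlast r R0 VT dV + VT * (t1 r R0 VT dV + t2 r R0 VT dV)).
Proof. pose proof Vs_gt_VT. unfold t1, t2. fold V. field. lra. Qed.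

Lemma xs_left_sweep (t : R) : t1 r R0 VT dV <= t ->
  xs r R0 VT dV t = V * t1 r R0 VT dV - V * (t - t1 r R0 VT dV).
Proof.
  intros ht. unfold xs. fold V.
  destruct (Rle_dec t (t1 r R0 VT dV)); [| reflexivity].
  replace t with (t1 r R0 VT dV) by lra. ring.
Qed.

Lemma Rlast_add_drift_le_r :
  Rlast r R0 VT dV + VT * (t1 r R0 VT dV + t2 r R0 VT dV) <= r.
Proof.
  pose proof Vs_gt_VT as hV.
  assert (hsq : 0 < (V - VT) ^ 2) by (apply pow_lt; lra).
  assert (heq : Rlast r R0 VT dV + VT * (t1 r R0 VT dV + t2 r R0 VT dV)
                = r * (VT * (2 * PI + 1) * (V + VT)) / (V - VT) ^ 2)
    by (unfold t1, t2, Rlast; fold V; field; lra).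
  rewrite heq. apply (Rmult_le_reg_r ((V - VT) ^ 2)); [exact hsq |].
  replace (r * (VT * (2 * PI + 1) * (V + VT)) / (V - VT) ^ 2 * (V - VT) ^ 2)
    with (r * (VT * (2 * PI + 1) * (V + VT))) by (field; lra).
  apply Rmult_le_compat_l; [lra |].
  replace (V + VT) with ((V - VT) + 2 * VT) by ring.
  apply sweep_margin; [exact PI_RGT_0 | exact hVT |].
  pose proof Vs_lower_bound. lra.
Qed.

End FinalSweep.

Theorem theorem7 (r R0 VT dV : R)
  (hr : 0 < r) (hR0 : r < R0) (hVT : 0 < VT) (hdV : 0 < dV)
  (hcond : dV >= - 2 * PI * (R0 / r) * VT + PI * VT + VT
                 + VT * sqrt (PI ^ 2 + 6 * PI + 7))
  (px py : R -> R)
  (hcont : forall t, 0 <= t <= t1 r R0 VT dV + t2 r R0 VT dV ->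
             continuity_pt px t /\ continuity_pt py t)
  (hspeed : forall s t,
             0 <= s <= t1 r R0 VT dV + t2 r R0 VT dV ->
             0 <= t <= t1 r R0 VT dV + t2 r R0 VT dV ->
             dist2 (px t) (py t) (px s) (py s) <= VT * Rabs (t - s))
  (hinit : dist2 (px 0) (py 0) 0 0 <= Rlast r R0 VT dV) :
  exists tau, 0 <= tau <= t1 r R0 VT dV + t2 r R0 VT dV /\
    px tau = xs r R0 VT dV tau /\ Rabs (py tau) <= r.
Proof.
  pose proof (t1_pos r R0 VT dV hr hVT hcond) as ht1.
  pose proof (t2_pos r R0 VT dV hr hVT hcond) as ht2.
  pose proof (Vs_mul_t1 r R0 VT dV hr hVT hcond) as hright.
  pose proof (Vs_mul_t1_sub_t2 r R0 VT dV hr hVT hcond) as hleft.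
  pose proof (Rlast_add_drift_le_r r R0 VT dV hr hVT hcond) as hreach.
  pose proof (xs_left_sweep r R0 VT dV) as hxs.
  pose proof (path_x_bound px py VT _ _ hspeed hinit) as hx.
  pose proof (path_y_bound px py VT _ _ hspeed hinit) as hy.
  set (T1 := t1 r R0 VT dV) in *. set (T2 := t2 r R0 VT dV) in *.
  set (V := Vs r R0 VT dV) in *.
  destruct (path_meets_leftward_point px T1 (T1 + T2) (V * T1) V) as [z [hz hxz]].
  - lra.
  - intros t ht. apply hcont. lra.
  - pose proof (hx T1 ltac:(lra)). pose proof (Rle_abs (px T1)). lra.
  - pose proof (hx (T1 + T2) ltac:(lra)). pose proof (Rle_abs (- px (T1 + T2))) as hneg.
    rewrite Rabs_Ropp in hneg. nra.
  - exists z. split; [lra | split].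
    + rewrite hxs; [exact hxz | lra].
    + pose proof (hy z ltac:(lra)). nra.
Qed.
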